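(* Let $\overline{\mathbf{x}}\in\mathcal{F}^R(\mathbf{s})$ be any feasible fractional flow, and let $\mathbf{x}^\bullet$ be the integral solution obtained by applying the rounding procedure $\texttt{PSRR}$ to each player's fractional flow $\overline{\mathbf{x}}_i$. Then, for $\beta>0$, with probability at least $1-\beta$, $$\phi(\mathbf{x}^\bullet)\le\phi(\overline{\mathbf{x}})+m(\gamma+1)\sqrt{2n\ln(m/\beta)}.$$
   Context: Routing game $\Gamma=(G,\ell,\mathbf{s})$: directed graph $G=(V,E)$, $m=|E|$, latencies $\ell_e$ non-decreasing, convex, twice differentiable, $\ell_e(n)\le n$, $\gamma$-Lipschitz; $n$ players with demands $s_i=(s_i^1,s_i^2)$. $\mathcal{F}^R(\mathbf{s})\subseteq[0,1]^{n\times m}$: each $\mathbf{x}_i$ is a fractional unit flow from $s_i^1$ to $s_i^2$. $\phi(\mathbf{x})=\frac1n\sum_i\sum_ex_{i,e}\ell_e(\sum_jx_{j,e})$. $\texttt{PSRR}(\overline{\mathbf{x}}_i)$: decompose $\overline{\mathbf{x}}_i$ into $s_i^1$-to-$s_i^2$ paths $P_j$ with weights $w_j$ (for each path, $w_j=\min_{e\in P_j}\overline x_{i,e}$, then subtract $w_j$ on the edges of $P_j$), sample a path $P$ with $\Pr[P=P_j]=w_j$ (independently across players), and set $x^\bullet_{i,e}=\mathbb{1}[e\in P]$. *)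

From HB Require Import structures.
From mathcomp Require Import all_boot all_order all_algebra.
From mathcomp Require Import all_classical all_reals all_analysis.
Set Implicit Arguments. Unset Strict Implicit. Unset Printing Implicit Defensive.
Import Order.TTheory GRing.Theory Num.Theory.
Local Open Scope ring_scope.

Section RoutingDefs.
Variables (R : realType) (V E : finType) (src dst : E -> V).

Fixpoint is_walk (u v : V) (p : seq E) : bool :=
  if p is e :: p' then (src e == u) && is_walk (dst e) v p' else u == v.

Definition is_path (u v : V) (p : seq E) : bool :=
  is_walk u v p && uniq (u :: map dst p).

Definition frac_unit_flow (s1 s2 : V) (x : E -> R) : Prop :=
  (forall e, 0 <= x e <= 1) /\
  (forall v : V, \sum_(e | src e == v) x e - \sum_(e | dst e == v) x e
                 = (v == s1)%:R - (v == s2)%:R).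

Definition feasible (n : nat) (s1 s2 : 'I_n -> V) (x : 'I_n -> E -> R) : Prop :=
  forall i, frac_unit_flow (s1 i) (s2 i) (x i).

Definition phi (n : nat) (l : E -> R -> R) (x : 'I_n -> E -> R) : R :=
  n%:R^-1 * \sum_(i < n) \sum_(e : E) x i e * l e (\sum_(j < n) x j e).

(* Output of the path decomposition step of PSRR for one player:
   paths P j with weights w j (j < K), forming a probability distribution,
   every path of positive weight is an s1-to-s2 path, and the paths'
   total weight on each edge does not exceed the fractional flow. *)
Definition path_decomposition (K : nat) (s1 s2 : V) (x : E -> R)
    (w : 'I_K -> R) (P : 'I_K -> seq E) : Prop :=
  [/\ forall j, 0 <= w j,
      \sum_(j < K) w j = 1,
      forall j, 0 < w j -> is_path s1 s2 (P j) &
      forall e, \sum_(j < K) w j * (e \in P j)%:R <= x e].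

Definition rounded (n K : nat) (P : 'I_n -> 'I_K -> seq E)
    (c : {ffun 'I_n -> 'I_K}) : 'I_n -> E -> R :=
  fun i e => (e \in P i (c i))%:R.

(* probability of an event under independent sampling (player i picks j w.p. w i j) *)
Definition prob (n K : nat) (w : 'I_n -> 'I_K -> R)
    (A : pred {ffun 'I_n -> 'I_K}) : R :=
  \sum_(c | A c) \prod_(i < n) w i (c i).

End RoutingDefs.

(* With the players' path choices independent, the load of an edge e under
   the rounded flow is a sum of n independent Bernoulli variables whose mean
   is at most the fractional load of e.  Hoeffding's bound (via the moment
   generating function estimate [1 - p + p e^y <= e^(p y + y^2/2)]) makes the
   load exceed its mean by [t = sqrt (2 n ln (m / beta))] with probability at
   most [beta / m], so by a union bound, with probability at least [1 - beta]
   no edge is overloaded by more than [t].  On that event each edge changes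
   its contribution [L l_e(L) / n] to phi by at most [(gamma + 1) t], by
   monotonicity, [gamma]-Lipschitzness and [l_e(n) <= n]. *)
From HB Require Import structures.
From mathcomp Require Import all_boot all_order all_algebra.
From mathcomp Require Import all_classical all_reals all_analysis.
From mathcomp Require Import ring lra.
Import Order.TTheory GRing.Theory Num.Theory.
Set Implicit Arguments. Unset Strict Implicit. Unset Printing Implicit Defensive.
Local Open Scope ring_scope.

Section BernoulliMgf.
Variables (R : realType) (p : R).
Hypothesis p01 : 0 <= p <= 1.

Let mgf_gap (y : R) := expR (y * p + y ^+ 2 / 2) - (1 - p + p * expR y).

Lemma is_derive_mgf_gap (y : R) :
  is_derive y 1 mgf_gap ((p + y) * expR (y * p + y ^+ 2 / 2) - p * expR y).
Proof.
pose g := fun v : R => v * p + v ^+ 2 / 2.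
have dg : is_derive y (1 : R) g (p + y).
  have dX := is_deriveX 2 (is_derive_id y 1).
  have -> : g = p \*: (@id R) + (2^-1 : R) \*: ((@id R) ^+ 2).
    by apply/funext => v; rewrite /g /= mulrC [_ / 2]mulrC.
  apply: (is_derive_eq (is_deriveD (is_deriveZ p (is_derive_id y 1))
                                  (is_deriveZ 2^-1 dX))).
  by rewrite /GRing.scale /= !mulr1 expr1 mulrA mulVf ?mul1r.
have dmix : is_derive y (1 : R) (fun v => 1 - p + p * expR v) (p * expR y).
  have -> : (fun v => 1 - p + p * expR v) = cst (1 - p) + p \*: expR by [].
  apply: (is_derive_eq (is_deriveD (is_derive_cst (1 - p) y 1)
                                  (is_deriveZ p (is_derive_expR y)))).
  by rewrite add0r.
have -> : mgf_gap = (expR \o g) - (fun v => 1 - p + p * expR v) by [].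
rewrite mulrC; apply: is_deriveB => //.
Qed.

(* Writing [z = y p + y^2/2 - y], the claim reduces via [1 + z <= expR z]
   to a polynomial inequality, which is a square plus nonnegative terms. *)
Lemma mgf_gap_derive_ge0 (y : R) : 0 <= y ->
  p * expR y <= (p + y) * expR (y * p + y ^+ 2 / 2).
Proof.
move=> y0; case/andP: p01 => p0 p1.
set z := y * p + y ^+ 2 / 2 - y.
have -> : y * p + y ^+ 2 / 2 = y + z by rewrite /z; ring.
rewrite expRD (mulrC (expR y)) mulrA; apply: ler_wpM2r; first exact: expR_ge0.
have poly : p <= (p + y) * (1 + z).
  rewrite /z.
  have : 0 <= y * (1 - (1 - p) + (1 - p) ^+ 2 + y / 2
                   - 3 * (1 - p) * y / 2 + y ^+ 2 / 2).
    apply: mulr_ge0 => //.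
    have := sqr_ge0 (y + (1 - 3 * (1 - p)) / 2); nra.
  nra.
apply: le_trans poly _; apply: ler_wpM2l; first lra.
exact: expR_ge1Dx.
Qed.

Lemma bernoulli_mgf_le (y : R) : 0 <= y ->
  1 - p + p * expR y <= expR (y * p + y ^+ 2 / 2).
Proof.
move=> y0.
have cgap : {within `[0, y], continuous mgf_gap}%classic.
  apply: continuous_subspaceT => v.
  exact/differentiable_continuous/derivable1_diffP/
    (@ex_derive _ _ _ _ _ _ _ (is_derive_mgf_gap v)).
have [c] := MVT_segment y0 (fun u _ => is_derive_mgf_gap u) cgap.
rewrite in_itv /= => /andP[c0 _].
rewrite /mgf_gap !mul0r expr0n /= mul0r addr0 expR0 mulr1 subr0 => gap.
have : 0 <= ((p + c) * expR (c * p + c ^+ 2 / 2) - p * expR c) * y.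
  by rewrite mulr_ge0 // subr_ge0 mgf_gap_derive_ge0.
lra.
Qed.

End BernoulliMgf.

Lemma sum_expR_centered_le (R : realType) (K : nat) (b : 'I_K -> bool)
    (w : 'I_K -> R) (x lam : R) :
  (forall j, 0 <= w j) -> \sum_j w j = 1 -> 0 <= x <= 1 ->
  \sum_j w j * (b j)%:R <= x -> 0 <= lam ->
  \sum_j w j * expR (lam * ((b j)%:R - x)) <= expR (lam ^+ 2 / 2).
Proof.
move=> w0 w1 x01 mean_le lam0.
have split_b j : w j * expR (lam * ((b j)%:R - x)) =
    expR (- (lam * x)) * (w j + w j * (b j)%:R * (expR lam - 1)).
  by rewrite mulrBr expRD; case: (b j); rewrite ?mulr1 ?mulr0 ?expR0; ring.
under eq_bigr do rewrite split_b.
rewrite -mulr_sumr big_split /= w1 -mulr_suml.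
have expR_lam_ge1 : 0 <= expR lam - 1 by rewrite subr_ge0 -expR0 ler_expR.
apply: le_trans (_ : expR (- (lam * x)) * (1 - x + x * expR lam) <= _).
  rewrite ler_wpM2l ?expR_ge0 //.
  have := ler_wpM2r expR_lam_ge1 mean_le; lra.
apply: le_trans (_ : expR (- (lam * x)) * expR (lam * x + lam ^+ 2 / 2) <= _).
  by rewrite ler_wpM2l ?expR_ge0 // bernoulli_mgf_le.
by rewrite -expRD addrA addNr add0r.
Qed.

Section ProductProbability.
Variables (R : realType) (n K : nat) (w : 'I_n -> 'I_K -> R).
Hypotheses (w_ge0 : forall i j, 0 <= w i j) (w_sum1 : forall i, \sum_j w i j = 1).
Implicit Types (A : pred {ffun 'I_n -> 'I_K}) (c : {ffun 'I_n -> 'I_K}).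

Lemma sum_ffun_prod (F : 'I_n -> 'I_K -> R) :
  \sum_(c : {ffun 'I_n -> 'I_K}) \prod_i F i (c i) = \prod_i \sum_j F i j.
Proof. by rewrite bigA_distr_bigA. Qed.

Lemma prod_weights_ge0 c : 0 <= \prod_i w i (c i).
Proof. by apply: prodr_ge0. Qed.

Lemma prob_ge0 A : 0 <= prob w A.
Proof. by apply: sumr_ge0 => c _; exact: prod_weights_ge0. Qed.

Lemma sum_prod_weights : \sum_(c : {ffun 'I_n -> 'I_K}) \prod_i w i (c i) = 1.
Proof. by rewrite sum_ffun_prod big1 // => i _; rewrite w_sum1. Qed.

Lemma prob_predC A : prob w (predC A) = 1 - prob w A.
Proof.
by rewrite -sum_prod_weights /prob [X in X - _](bigID A) /= addrC addrK.
Qed.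

Lemma prob_le1 A : prob w A <= 1.
Proof. by have := prob_ge0 (predC A); rewrite prob_predC subr_ge0. Qed.

Lemma prob_le_expectation A (f : {ffun 'I_n -> 'I_K} -> R) :
  (forall c, A c -> 1 <= f c) -> (forall c, 0 <= f c) ->
  prob w A <= \sum_(c : {ffun 'I_n -> 'I_K}) (\prod_i w i (c i)) * f c.
Proof.
move=> f_ge1 f_ge0; rewrite /prob big_mkcond /=; apply: ler_sum => c _.
case: ifP => [/f_ge1 Ac|_]; last by rewrite mulr_ge0 ?prod_weights_ge0.
by rewrite -{1}[\prod_i _]mulr1 ler_wpM2l ?prod_weights_ge0.
Qed.

Lemma prob_union_bound (T : finType) A (B : T -> pred {ffun 'I_n -> 'I_K}) :
  (forall c, A c -> exists e, B e c) -> prob w A <= \sum_e prob w (B e).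
Proof.
move=> AB.
have count_ge0 c : 0 <= \sum_e (B e c)%:R :> R by exact: sumr_ge0.
apply: le_trans (@prob_le_expectation A (fun c => \sum_e (B e c)%:R) _ _) _
  => // [c /AB [e Be]|].
  by rewrite (bigD1 e) //= Be lerDl sumr_ge0.
under eq_bigr do rewrite mulr_sumr.
rewrite exchange_big /= le_eqVlt; apply/orP; left; apply/eqP.
apply: eq_bigr => e _; rewrite /prob [in RHS]big_mkcond /=.
by apply: eq_bigr => c _; case: (B e c); rewrite ?mulr1 ?mulr0.
Qed.

Variables (b : 'I_n -> 'I_K -> bool) (x : 'I_n -> R).
Hypotheses (x01 : forall i, 0 <= x i <= 1)
  (mean_le : forall i, \sum_j w i j * (b i j)%:R <= x i).

Definition upper_tail (t : R) : pred {ffun 'I_n -> 'I_K} :=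
  fun c => \sum_i x i + t < \sum_i (b i (c i))%:R.

Lemma chernoff_bound (lam t : R) : 0 <= lam ->
  prob w (upper_tail t) <= expR (- (lam * t) + n%:R * (lam ^+ 2 / 2)).
Proof.
move=> lam0.
pose f c := expR (lam * (\sum_i ((b i (c i))%:R - x i) - t)).
apply: le_trans (@prob_le_expectation _ f _ _) _ => [c tail|c|].
- rewrite -[X in X <= _]expR0 ler_expR mulr_ge0 // sumrB.
  by move: tail; rewrite /upper_tail; lra.
- exact: expR_ge0.
have factor c : (\prod_i w i (c i)) * f c = expR (- (lam * t)) *
    \prod_i (w i (c i) * expR (lam * ((b i (c i))%:R - x i))).
  rewrite /f mulrBr expRD mulr_sumr expR_sum big_split /=.
  by rewrite [X in _ * X]mulrC mulrCA.
under eq_bigr do rewrite factor.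
rewrite -mulr_sumr.
rewrite (sum_ffun_prod (fun i j => w i j * expR (lam * ((b i j)%:R - x i)))).
rewrite expRD ler_wpM2l ?expR_ge0 //.
apply: le_trans (_ : \prod_(i < n) expR (lam ^+ 2 / 2) <= _).
  apply: ler_prod => i _; rewrite sumr_ge0 => [|j _]; last first.
    by rewrite mulr_ge0 ?expR_ge0.
  exact: sum_expR_centered_le.
by rewrite prodr_const card_ord expRM_natl.
Qed.

Lemma hoeffding_bound (t : R) : (0 < n)%N -> 0 <= t ->
  prob w (upper_tail t) <= expR (- (t ^+ 2 / (2 * n%:R))).
Proof.
move=> n_gt0 t0; have N_gt0 : 0 < n%:R :> R by rewrite ltr0n.
have -> : - (t ^+ 2 / (2 * n%:R))
          = - (t / n%:R * t) + n%:R * ((t / n%:R) ^+ 2 / 2).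
  by field; rewrite gt_eqF.
exact: chernoff_bound (divr_ge0 t0 (ltW N_gt0)).
Qed.

(* [t] solves [expR (- t^2 / (2 n)) = beta / a]; when [a < beta] the claimed
   bound exceeds 1, and when [n = 0] the tail event is empty. *)
Lemma hoeffding_bound_ln (a beta : R) : 0 < a -> 0 < beta ->
  prob w (upper_tail (Num.sqrt (2 * n%:R * ln (a / beta)))) <= beta / a.
Proof.
move=> a_gt0 beta_gt0; set t := Num.sqrt _.
have t_ge0 : 0 <= t by exact: sqrtr_ge0.
have bound_ge0 : 0 <= beta / a by rewrite divr_ge0 ?ltW.
have [ab_lt1|ab_ge1] := ltrP (a / beta) 1.
  apply: le_trans (prob_le1 _) _.
  by rewrite ler_pdivlMr // mul1r; move: ab_lt1; rewrite ltr_pdivrMr // mul1r => /ltW.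
have [n0|n_gt0] := posnP n.
  have sum0 (f : 'I_n -> R) : \sum_i f i = 0.
    by apply: big1 => i; have := ltn_ord i; rewrite {2}n0.
  by rewrite /prob big1 // => c; rewrite /upper_tail !sum0 add0r ltNge t_ge0.
have N_gt0 : 0 < n%:R :> R by rewrite ltr0n.
apply: le_trans (@hoeffding_bound t n_gt0 t_ge0) _.
rewrite sqr_sqrtr ?mulr_ge0 ?ln_ge0 ?ler0n //.
rewrite [_ * ln _]mulrC mulfK ?gt_eqF ?mulr_gt0 //.
by rewrite expRN lnK ?posrE ?divr_gt0 // invf_div.
Qed.

End ProductProbability.

Section EdgeCost.
Variables (R : realType) (f : R -> R) (g N : R).
Hypotheses (f_homo : forall x y, 0 <= x -> x <= y -> f x <= f y)
  (f0_ge0 : 0 <= f 0) (fN_le : f N <= N)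
  (f_lip : forall x y, 0 <= x -> 0 <= y -> `|f x - f y| <= g * `|x - y|).

Lemma lipschitz_const_ge0 : 0 <= g.
Proof.
have := f_lip (lexx 0) ler01; rewrite sub0r normrN normr1 mulr1.
exact/le_trans/normr_ge0.
Qed.

(* For [Lb < L], split [L f L - Lb f Lb] as [Lb (f L - f Lb) + (L - Lb) f L]:
   the first term is paid by the Lipschitz constant, the second by [f L <= N]. *)
Lemma load_cost_le (L Lb t : R) : 0 <= L <= N -> 0 <= Lb <= N ->
  L <= Lb + t -> 0 <= t -> L * f L <= Lb * f Lb + N * ((g + 1) * t).
Proof.
move=> /andP[L0 LN] /andP[Lb0 LbN] L_le t0.
have g0 := lipschitz_const_ge0.
have fL0 : 0 <= f L by exact: le_trans f0_ge0 (f_homo (lexx 0) L0).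
have slack0 : 0 <= N * ((g + 1) * t) by rewrite !mulr_ge0 //; lra.
have [L_le_Lb|Lb_lt_L] := lerP L Lb.
  by have := ler_pM L0 fL0 L_le_Lb (f_homo L0 L_le_Lb); lra.
have lip : f L - f Lb <= g * (L - Lb).
  have := f_lip L0 Lb0; rewrite (gtr0_norm (x := L - Lb)) ?subr_gt0 //.
  exact/le_trans/ler_norm.
have first : Lb * (f L - f Lb) <= N * (g * t).
  apply: le_trans (ler_wpM2l Lb0 lip) _.
  by rewrite ler_pM ?mulr_ge0 ?ler_wpM2l //; lra.
have second : (L - Lb) * f L <= t * N.
  by rewrite ler_pM //; [lra | lra | exact: le_trans (f_homo L0 LN) fN_le].
have -> : L * f L = Lb * f Lb + (Lb * (f L - f Lb) + (L - Lb) * f L) by ring.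
have -> : N * ((g + 1) * t) = N * (g * t) + t * N by ring.
lra.
Qed.

End EdgeCost.

Lemma sum_ord_unit_interval (R : realType) (n : nat) (x : 'I_n -> R) :
  (forall i, 0 <= x i <= 1) -> 0 <= \sum_i x i <= n%:R.
Proof.
move=> x01; rewrite sumr_ge0 /= => [|i _]; last by case/andP: (x01 i).
apply: le_trans (_ : \sum_(i < n) (1 : R) <= _); last by rewrite sumr_const card_ord.
by apply: ler_sum => i _; case/andP: (x01 i).
Qed.

Lemma phi_sum_edges (R : realType) (E : finType) (n : nat) (l : E -> R -> R)
    (x : 'I_n -> E -> R) :
  phi l x = \sum_e n%:R^-1 * ((\sum_i x i e) * l e (\sum_j x j e)).
Proof.
by rewrite /phi exchange_big mulr_sumr; apply: eq_bigr => e _; rewrite mulr_suml.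
Qed.

Lemma phi_le_of_loads (R : realType) (E : finType) (n : nat) (l : E -> R -> R)
    (gamma t : R) (x y : 'I_n -> E -> R) :
  (forall e x y, 0 <= x -> x <= y -> l e x <= l e y) ->
  (forall e, 0 <= l e 0) -> (forall e, l e n%:R <= n%:R) ->
  (forall e x y, 0 <= x -> 0 <= y -> `|l e x - l e y| <= gamma * `|x - y|) ->
  (forall i e, 0 <= x i e <= 1) -> (forall i e, 0 <= y i e <= 1) ->
  (forall e, \sum_i x i e <= \sum_i y i e + t) -> 0 <= t ->
  phi l x <= phi l y + #|E|%:R * (gamma + 1) * t.
Proof.
move=> l_homo l0 lN l_lip x01 y01 load_le t0.
have -> : #|E|%:R * (gamma + 1) * t = \sum_(e : E) (gamma + 1) * t.
  by rewrite sumr_const -[RHS]mulr_natl mulrA.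
rewrite !phi_sum_edges -big_split /=.
apply: ler_sum => e _.
have cost := load_cost_le (l_homo e) (l0 e) (lN e) (l_lip e)
  (sum_ord_unit_interval (x01^~ e)) (sum_ord_unit_interval (y01^~ e))
  (load_le e) t0.
have slack0 : 0 <= (gamma + 1) * t.
  by rewrite mulr_ge0 // addr_ge0 // (lipschitz_const_ge0 (l_lip e)).
have [N0|N_neq0] := eqVneq (n%:R : R) 0; first by rewrite N0 invr0 !mul0r add0r.
rewrite -[_ * t](mulKf N_neq0) -mulrDr.
by rewrite ler_wpM2l // invr_ge0.
Qed.

Theorem lemma4p8 (R : realType) (V E : finType) (src dst : E -> V)
  (l : E -> R -> R) (gamma : R) (n : nat) (s1 s2 : 'I_n -> V)
  (xbar : 'I_n -> E -> R) (K : nat)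
  (w : 'I_n -> 'I_K -> R) (P : 'I_n -> 'I_K -> seq E) (beta : R) :
  (* latency assumptions (on the nonnegative reals) *)
  (forall e x y, 0 <= x -> x <= y -> l e x <= l e y) ->
  (forall e x y t, 0 <= x -> 0 <= y -> 0 <= t <= 1 ->
     l e (t * x + (1 - t) * y) <= t * l e x + (1 - t) * l e y) ->
  (forall e x, 0 < x -> derivable (l e) x 1 /\ derivable (derive1 (l e)) x 1) ->
  (forall e, 0 <= l e 0) ->
  (forall e, l e n%:R <= n%:R) ->
  (forall e x y, 0 <= x -> 0 <= y -> `|l e x - l e y| <= gamma * `|x - y|) ->
  (* feasible fractional flow *)
  feasible src dst s1 s2 xbar ->
  (* PSRR path decomposition of each player's flow *)
  (forall i, path_decomposition src dst (s1 i) (s2 i) (xbar i) (w i) (P i)) ->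
  0 < beta ->
  1 - beta <=
    prob w (fun c => phi l (@rounded R E n K P c) <=
      phi l xbar + #|E|%:R * (gamma + 1)
                   * Num.sqrt (2 * n%:R * ln (#|E|%:R / beta))).
Proof.
move=> l_homo _ _ l0 lN l_lip feas dec beta_gt0.
set t := Num.sqrt _; set good := (fun c => _).
have w_ge0 i j : 0 <= w i j by case: (dec i).
have w_sum1 i : \sum_j w i j = 1 by case: (dec i).
have mean_le i e : \sum_j w i j * (e \in P i j)%:R <= xbar i e.
  by case: (dec i) => _ _ _ ->.
have xbar01 i e : 0 <= xbar i e <= 1 by case: (feas i) => ->.
pose overload e := upper_tail (fun i j => e \in P i j) (xbar^~ e) t.
suff : prob w (predC good) <= beta by rewrite prob_predC //; lra.
apply: le_trans (prob_union_bound w_ge0 (B := overload) _) _.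
  move=> c /negP bad; case: (boolP [exists e, overload e c]) => [/existsP //|].
  move=> /existsPn no_overload; exfalso; apply: bad.
  apply: phi_le_of_loads => // [i e|e|]; last exact: sqrtr_ge0.
    by rewrite /rounded; case: (_ \in _); rewrite ?ler01 ?lexx.
  by rewrite leNgt; exact: no_overload.
apply: le_trans (_ : \sum_(e : E) beta / #|E|%:R <= _).
  apply: ler_sum => e _; apply: hoeffding_bound_ln => //.
  by rewrite ltr0n; apply/card_gt0P; exists e.
rewrite sumr_const; change (beta / #|E|%:R *+ #|E| <= beta).
rewrite -mulr_natr.
have [->|E_neq0] := eqVneq #|E| 0%N; first by rewrite mulr0 ltW.
by rewrite divfK // pnatr_eq0.
Qed.
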